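(* Let $D=(V,E;s,t)$, $N$ be as in the context and let $\widetilde\Gamma_D=(N,\tilde\gamma)$ be the auxiliary game. Then $\mathcal{C}(\widetilde\Gamma_D)=\{x\in\chi(\widetilde\Gamma_D): x(N\cap P)\ge1 \text{ for all } P\in\mathscr{P}\}$, and this set is non-empty.
   Context: $D=(V,E;s,t)$ is a directed network with unit arc capacities (parallel arcs allowed); $N\subseteq E$ is the set of private arcs (players), $M=E\setminus N$ public arcs; every $s$-$t$ path contains an arc of $N$ and every arc lies on some $s$-$t$ path. A path is a set of arcs joining a sequence of distinct vertices along the same direction; $\mathscr{P}$ is the set of all $s$-$t$ paths. For $S\subseteq N$, $\gamma(S)$ is the maximum number of pairwise arc-disjoint $s$-$t$ paths in $D_S=(V,S\cup M;s,t)$. $\sigma_N$ is the maximum number of $s$-$t$ paths pairwise sharing no arc of $N$. The auxiliary game $\widetilde\Gamma_D=(N,\tilde\gamma)$ has $\tilde\gamma(N)=\sigma_N$ and $\tilde\gamma(S)=\gamma(S)$ for $S\subsetneq N$. $x(S)=\sum_{i\in S}x_i$; $\chi(\widetilde\Gamma_D)=\{x\in\mathbb{R}^N_{\ge0}:x(N)=\sigma_N\}$; $\mathcal{C}(\widetilde\Gamma_D)=\{x\in\chi(\widetilde\Gamma_D):x(S)\ge\tilde\gamma(S)\ \forall S\subseteq N\}$. *)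

From HB Require Import structures.
From mathcomp Require Import all_boot all_order all_algebra.
From mathcomp Require Import boolp reals.
Set Implicit Arguments. Unset Strict Implicit. Unset Printing Implicit Defensive.
Import Order.TTheory GRing.Theory Num.Theory.

Section Network.
Variables (V E : finType) (tl hd : E -> V) (s t : V).

Fixpoint walk_to_t (v : V) (p : seq E) : bool :=
  if p is e :: p' then (tl e == v) && walk_to_t (hd e) p' else v == t.

Definition stpath_seq (p : seq E) : bool :=
  walk_to_t s p && uniq (s :: map hd p).

Definition is_stpath (P : {set E}) : Prop :=
  exists p : seq E, stpath_seq p /\ P = [set e in p].

Definition disj_packing (A : {set E}) (k : nat) : Prop :=
  exists F : 'I_k -> {set E},
    (forall i, is_stpath (F i) /\ F i \subset A) /\
    (forall i j, i != j -> [disjoint F i & F j]).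

Definition N_packing (N : {set E}) (k : nat) : Prop :=
  exists F : 'I_k -> {set E},
    (forall i, is_stpath (F i)) /\
    (forall i j, i != j -> [disjoint (F i :&: N) & F j]).

(* Maximum k (at most #|E|.+1) satisfying Q; under the standing assumptions
   every packing has size at most #|N| <= #|E|, so this is the true maximum. *)
Definition bmax (Q : nat -> Prop) : nat :=
  \max_(k < #|E|.+2 | `[< Q k >]) k.

(* gamma(S): max number of arc-disjoint s-t paths in D_S = (V, S u M). *)
Definition gamma (N S : {set E}) : nat := bmax (disj_packing (S :|: ~: N)).

Definition sigmaN (N : {set E}) : nat := bmax (N_packing N).

Definition gamma_t (N S : {set E}) : nat :=
  if S == N then sigmaN N else gamma N S.

Definition xsum (R : realType) (x : E -> R) (S : {set E}) : R :=
  (\sum_(i in S) x i)%R.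

(* imputation-type set chi: x in R^N (coordinates outside N are ignored). *)
Definition in_chi (R : realType) (N : {set E}) (x : E -> R) : Prop :=
  (forall i, i \in N -> (0 <= x i)%R) /\ xsum x N = ((sigmaN N)%:R)%R.

Definition in_core (R : realType) (N : {set E}) (x : E -> R) : Prop :=
  in_chi N x /\ forall S : {set E}, S \subset N -> (((gamma_t N S)%:R)%R <= xsum x S)%R.

End Network.

(* A path P is routed by the coalition N :&: P using public arcs, so the path
   constraints x(N :&: P) >= 1 are core constraints.  Conversely, gamma(S)
   arc-disjoint paths of D_S have pairwise disjoint private parts inside S, each
   of weight at least 1, so the path constraints give x(S) >= gamma(S).
   The core is non-empty by Menger's theorem for private arcs: some C included
   in N meets every s-t path and has |C| = sigma_N, and the indicator of C lies
   in the core.  Menger's theorem is obtained from integral flows with capacity 1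
   on private and infinite capacity on public arcs: a flow of value k splits into
   k paths pairwise sharing no private arc, so values are bounded by |N|, and a
   flow that admits no augmenting path is matched by the cut of saturated
   private arcs leaving the residual reachable set. *)

From HB Require Import structures.
From mathcomp Require Import all_boot all_order all_algebra.
From mathcomp Require Import boolp reals.
From mathcomp Require Import zify ring.
Set Implicit Arguments. Unset Strict Implicit. Unset Printing Implicit Defensive.
Import Order.TTheory GRing.Theory Num.Theory.

Section BoundedMax.
Variable E : finType.

Lemma bmax_sat (Q : nat -> Prop) : Q 0 -> Q (bmax E Q).
Proof.
move=> Q0; rewrite /bmax (bigop.bigmax_eq_arg (ord0 : 'I_#|E|.+2)); last exact/asboolP.
by case: arg_maxnP => [|i /asboolP //]; apply/asboolP.
Qed.

Lemma leq_bmax (Q : nat -> Prop) k : Q k -> k < #|E|.+2 -> k <= bmax E Q.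
Proof.
move=> Qk lt_k.
exact: (@leq_bigmax_cond _ (fun j : 'I_#|E|.+2 => `[< Q j >]) val (Ordinal lt_k) (asboolT Qk)).
Qed.

End BoundedMax.

Lemma family_extend (T : Type) (p : T -> Prop) (r : T -> T -> Prop) k
    (F : 'I_k -> T) (x : T) :
  (forall y z, r y z -> r z y) -> p x -> (forall i, p (F i)) ->
  (forall i, r x (F i)) -> (forall i j, i != j -> r (F i) (F j)) ->
  exists G : 'I_k.+1 -> T,
    (forall i, p (G i)) /\ (forall i j, i != j -> r (G i) (G j)).
Proof.
move=> r_sym px pF rxF rF.
exists (fun i => if unlift ord_max i is Some j then F j else x); split.
  by move=> i; case: unliftP.
move=> i j; case: unliftP => [i' ->|->]; case: unliftP => [j' ->|->] //.
- by rewrite (inj_eq lift_inj); apply: rF.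
- by move=> _; apply: r_sym.
- by rewrite eqxx.
Qed.

Section SignedWalks.
Variables (V E : finType) (tl hd : E -> V).
Local Open Scope ring_scope.

Definition src (x : E * bool) : V := if x.2 then tl x.1 else hd x.1.
Definition dst (x : E * bool) : V := if x.2 then hd x.1 else tl x.1.
Definition sign (x : E * bool) : int := if x.2 then 1 else -1.

Fixpoint swalk (v : V) (st : seq (E * bool)) (w : V) : bool :=
  if st is x :: st' then (src x == v) && swalk (dst x) st' w else v == w.

Definition netflow (g : E -> int) (v : V) : int :=
  \sum_(a | tl a == v) g a - \sum_(a | hd a == v) g a.

Definition walk_flow (st : seq (E * bool)) (a : E) : int :=
  \sum_(x <- st | x.1 == a) sign x.

Lemma netflowD f g v :
  netflow (fun a => f a + g a) v = netflow f v + netflow g v.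
Proof. by rewrite /netflow !big_split /=; ring. Qed.

Lemma netflowMl c g v : netflow (fun a => c * g a) v = c * netflow g v.
Proof. by rewrite /netflow -!mulr_sumr mulrBr. Qed.

Lemma netflow_arc x v :
  netflow (fun a => if x.1 == a then sign x else 0) v =
  (src x == v)%:R - (dst x == v)%:R.
Proof.
have pick (P : pred E) : \sum_(a | P a) (if x.1 == a then sign x else 0) =
                         (P x.1)%:R * sign x.
  case: (boolP (P x.1)) => Px.
    rewrite -big_mkcondr (big_pred1 x.1) ?mul1r // => a /=.
    by rewrite eq_sym; case: eqP => [->|_]; rewrite ?andbT ?andbF.
  by rewrite mul0r big1 // => a Pa; case: eqP => // eq_xa; rewrite eq_xa Pa in Px.
rewrite /netflow !pick /src /dst /sign.
by case: (x.2); case: (tl x.1 == v); case: (hd x.1 == v) => /=; ring.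
Qed.

Lemma netflow_walk v st w u : swalk v st w ->
  netflow (walk_flow st) u = (v == u)%:R - (w == u)%:R.
Proof.
elim: st v => [|x st IH] v /=.
  by move/eqP->; rewrite subrr /netflow !big1 ?subr0 // => a _; rewrite /walk_flow big_nil.
case/andP=> /eqP <- /IH walk_st.
have -> : walk_flow (x :: st) =
          (fun a => (if x.1 == a then sign x else 0) + walk_flow st a).
  by apply/funext => a; rewrite /walk_flow big_cons; case: ifP; rewrite ?add0r.
by rewrite netflowD netflow_arc walk_st; ring.
Qed.

Lemma walk_flow_notin st a : a \notin map fst st -> walk_flow st a = 0.
Proof.
move=> a_notin; rewrite /walk_flow big_seq_cond big_pred0 // => x.
by apply: contraNF a_notin => /andP[x_st /eqP <-]; apply: map_f.
Qed.

Lemma walk_flow_in st x : uniq (map fst st) -> x \in st -> walk_flow st x.1 = sign x.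
Proof.
elim: st => [|y st IH] //= /andP[y_notin uniq_st].
rewrite inE /walk_flow big_cons => /predU1P[->|x_st].
  by rewrite eqxx -/(walk_flow st y.1) walk_flow_notin ?addr0.
rewrite -/(walk_flow st x.1) IH //; case: eqP => // eq_yx.
by move: y_notin; rewrite eq_yx map_f.
Qed.

Lemma swalk_uniq_arcs v st w :
  swalk v st w -> uniq (v :: map dst st) -> uniq (map fst st).
Proof.
elim: st v => [|y st IH] v //= /andP[/eqP src_y walk_st] /andP[v_notin /andP[dst_y uniq_st]].
rewrite (IH (dst y)) ?andbT /= ?dst_y //; apply/mapP => -[z z_st eq_yz].
have [eq2|neq2] := eqVneq z.2 y.2.
  have eq_zy : z = y by apply: injective_projections; rewrite ?eq_yz.
  by move: dst_y; rewrite -eq_zy map_f.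
have dst_z : dst z = v.
  by rewrite -src_y /dst /src -eq_yz; move: neq2; case: (z.2); case: (y.2).
by move: v_notin; rewrite inE negb_or -dst_z map_f ?andbF.
Qed.

Definition step_rel (ok : pred (E * bool)) : rel V :=
  fun v w => [exists x, [&& ok x, src x == v & dst x == w]].

Lemma connect_step ok u x :
  connect (step_rel ok) u (src x) -> ok x -> connect (step_rel ok) u (dst x).
Proof.
move=> conn ok_x; apply: connect_trans conn (connect1 _).
by apply/existsP; exists x; rewrite ok_x !eqxx.
Qed.

Lemma connect_swalk ok v w : connect (step_rel ok) v w ->
  exists st, [/\ swalk v st w, all ok st & uniq (v :: map dst st)].
Proof.
case/connectP=> p p_path ->; case/shortenP: p_path => {}p p_path uniq_p _.
suff [st [walk_st ok_st map_st]] :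
    exists st, [/\ swalk v st (last v p), all ok st & map dst st = p].
  by exists st; rewrite map_st.
elim: p v {uniq_p} p_path => [|u p IH] v /=; first by exists [::]; rewrite /= eqxx.
case/andP=> /existsP[x /and3P[ok_x /eqP src_x /eqP dst_x]] /IH[st [walk_st ok_st map_st]].
by exists (x :: st); rewrite /= src_x eqxx dst_x walk_st ok_x ok_st map_st.
Qed.

End SignedWalks.

Section Network.
Variables (V E : finType) (tl hd : E -> V) (s t : V) (N : {set E}).
Local Notation stpath := (is_stpath tl hd s t).
Local Notation dst := (dst tl hd).
Local Notation swalk := (swalk tl hd).
Local Notation netflow := (netflow tl hd).
Local Notation step_rel := (step_rel tl hd).

Definition is_stcut (C : {set E}) : Prop := forall P, stpath P -> P :&: C != set0.

Lemma stcut_neq C : is_stcut C -> s != t.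
Proof.
move=> cut_C; apply/eqP => eq_st.
have : stpath set0.
  by exists [::]; rewrite /stpath_seq /= eq_st eqxx; split => //; apply/setP => a; rewrite !inE.
by move/cut_C; rewrite set0I eqxx.
Qed.

Lemma walk_to_t_leaves (X : {set V}) v p : v \in X -> t \notin X ->
  walk_to_t tl hd t v p -> exists2 a, a \in p & (tl a \in X) && (hd a \notin X).
Proof.
elim: p v => [|a p IH] v /= v_X t_notX; first by move/eqP => eq_vt; rewrite -eq_vt v_X in t_notX.
case/andP => /eqP tl_a walk_p; case hd_X: (hd a \in X).
  by have [b b_p leaves_b] := IH _ hd_X t_notX walk_p; exists b; rewrite ?inE ?b_p ?orbT.
by exists a; rewrite ?inE ?eqxx // tl_a v_X hd_X.
Qed.

Lemma stpath_leaves (X : {set V}) P : s \in X -> t \notin X -> stpath P ->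
  exists2 a, a \in P & (tl a \in X) && (hd a \notin X).
Proof.
move=> s_X t_notX [p [/andP[walk_p _] ->]].
by have [a a_p leaves_a] := walk_to_t_leaves s_X t_notX walk_p; exists a; rewrite ?inE.
Qed.

Lemma forward_stpath st : swalk s st t -> all snd st -> uniq (s :: map dst st) ->
  stpath [set a in map fst st].
Proof.
move=> walk_st fwd_st uniq_st; exists (map fst st); split => //.
have map_dst : map dst st = map (hd \o fst) st.
  by apply/eq_in_map => x /(allP fwd_st); rewrite /dst /= => ->.
rewrite /stpath_seq -map_comp -map_dst uniq_st andbT.
elim: st s walk_st fwd_st {uniq_st map_dst} => [|[a []] st IH] v //=.
by case/andP => /eqP <- walk_st fwd_st; rewrite eqxx IH.
Qed.

Lemma N_packing_le_cut (C : {set E}) k : C \subset N -> is_stcut C ->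
  N_packing tl hd s t N k -> k <= #|C|.
Proof.
move=> sub_CN cut_C [F [F_path F_disj]].
have /fin_all_exists[f f_in] i : exists a, a \in F i :&: C.
  by apply/set0Pn/cut_C/F_path.
have f_inj : injective f.
  move=> i j eq_f; apply/eqP/negPn/negP => /F_disj/disjointFr ij_disj.
  case/setIP: (f_in i) (f_in j) => F_i C_i /setIP[F_j _].
  by move: F_j; rewrite -eq_f (ij_disj (f i)) // inE F_i (subsetP sub_CN).
rewrite -[k]card_ord -cardsT -(card_imset _ f_inj); apply: subset_leq_card.
by apply/subsetP => _ /imsetP[i _ ->]; case/setIP: (f_in i).
Qed.

Local Open Scope ring_scope.

(* The value of such a flow [g] is [netflow g s]. *)
Definition is_Nflow (g : E -> int) : Prop :=
  [/\ forall a, 0 <= g a, forall a, a \in N -> g a <= 1 &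
      forall v, v != s -> v != t -> netflow g v = 0].

Lemma netflow_cut g (X : {set V}) :
  (forall v, v != s -> v != t -> netflow g v = 0) -> s \in X -> t \notin X ->
  netflow g s = \sum_(a | (tl a \in X) && (hd a \notin X)) g a
              - \sum_(a | (hd a \in X) && (tl a \notin X)) g a.
Proof.
move=> g_cons s_X t_notX.
have by_end (f : E -> V) : \sum_(a | f a \in X) g a = \sum_(v in X) \sum_(a | f a == v) g a.
  rewrite (partition_big f (mem X)) //=; apply: eq_bigr => v v_X; apply: eq_bigl => a.
  by case: eqP => [->|]; rewrite ?andbT ?andbF.
have : \sum_(v in X) netflow g v = netflow g s.
  rewrite (bigD1 s) //= big1 ?addr0 // => v /andP[v_X neq_vs]; apply: g_cons => //.
  by apply: contraNneq t_notX => <-.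
rewrite /netflow sumrB -!by_end => <-.
rewrite (bigID (fun a => hd a \in X)) (bigID (fun a => tl a \in X) (fun a => hd a \in X)) /=.
rewrite (eq_bigl (fun a => (hd a \in X) && (tl a \in X)) _ (fun a => andbC _ _)) /=.
ring.
Qed.

Lemma Nflow_shift g st c : is_Nflow g -> s != t -> swalk s st t ->
  uniq (s :: map dst st) ->
  (forall x, x \in st ->
     0 <= g x.1 + c * sign x /\ (x.1 \in N -> g x.1 + c * sign x <= 1)) ->
  is_Nflow (fun a => g a + c * walk_flow st a) /\
  netflow (fun a => g a + c * walk_flow st a) s = netflow g s + c.
Proof.
move=> [g_ge0 g_le1 g_cons] neq_st walk_st uniq_st bounds.
have uniq_arcs := swalk_uniq_arcs walk_st uniq_st.
have shifted a : g a + c * walk_flow st a = g a \/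
    exists2 x, x \in st & x.1 = a /\ g a + c * walk_flow st a = g x.1 + c * sign x.
  have [/mapP[x x_st ->]|a_notin] := boolP (a \in map fst st).
    by right; exists x; rewrite ?walk_flow_in.
  by left; rewrite walk_flow_notin ?mulr0 ?addr0.
have value u : netflow (fun a => g a + c * walk_flow st a) u =
               netflow g u + c * ((s == u)%:R - (t == u)%:R).
  by rewrite (netflowD _ _ g (fun a => c * walk_flow st a)) netflowMl (netflow_walk _ walk_st).
split; last by rewrite value eqxx eq_sym (negbTE neq_st) subr0 mulr1.
split.
- by move=> a; case: (shifted a) => [->|[x x_st [_ ->]]]; [apply: g_ge0 | apply: (bounds x x_st).1].
- move=> a a_N; case: (shifted a) => [->|[x x_st [eq_xa ->]]]; first exact: g_le1.
  by apply: (bounds x x_st).2; rewrite eq_xa.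
- move=> v neq_vs neq_vt; rewrite value g_cons //.
  by rewrite eq_sym (negbTE neq_vs) eq_sym (negbTE neq_vt) subrr mulr0 addr0.
Qed.

Definition residual (g : E -> int) (x : E * bool) : bool :=
  if x.2 then (x.1 \notin N) || (g x.1 < 1) else 0 < g x.1.

Lemma Nflow_augment_or_cut g : is_Nflow g -> s != t ->
  (exists g', is_Nflow g' /\ netflow g' s = netflow g s + 1) \/
  (exists C : {set E}, [/\ C \subset N, is_stcut C & netflow g s = #|C|%:R]).
Proof.
move=> flow_g neq_st; have [g_ge0 g_le1 g_cons] := flow_g.
pose X := [set v | connect (step_rel (residual g)) s v].
have s_X : s \in X by rewrite inE connect0.
have reach x : src tl hd x \in X -> residual g x -> dst x \in X.
  by rewrite !inE => /connect_step; apply.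
have [t_X|t_notX] := boolP (t \in X).
  left; move: t_X; rewrite inE => /connect_swalk[st [walk_st res_st uniq_st]].
  exists (fun a => g a + 1 * walk_flow st a).
  apply: Nflow_shift => // -[a b] /(allP res_st); rewrite /residual /sign /= mul1r.
  have := g_ge0 a; case: b => /= g_ge0a res_a;
    by split => [|a_N]; [lia | have := g_le1 _ a_N; lia].
right.
have out_full a : tl a \in X -> hd a \notin X -> (a \in N) && (g a == 1).
  move=> tl_X; apply: contraNT => not_full; apply: (reach (a, true)) => //.
  rewrite /residual /=; case: (boolP (a \in N)) => //= a_N.
  by move: not_full; rewrite a_N /=; have := g_le1 a a_N; lia.
have in_empty a : hd a \in X -> tl a \notin X -> g a = 0.
  move=> hd_X; apply: contraNeq => nz_a; apply: (reach (a, false)) => //.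
  by rewrite /residual /=; have := g_ge0 a; lia.
exists [set a | (tl a \in X) && (hd a \notin X)]; split.
- apply/subsetP => a; rewrite inE => /andP[tl_X hd_notX].
  by case/andP: (out_full a tl_X hd_notX).
- move=> P /(stpath_leaves s_X t_notX)[a a_P leaves_a].
  by apply/set0Pn; exists a; rewrite in_setI a_P inE.
- rewrite (netflow_cut g_cons s_X t_notX) [X in _ - X]big1 => [|a /andP[]]; last exact: in_empty.
  rewrite subr0 -sumr_const (eq_bigr (fun _ => 1)) => [|a /andP[tl_X hd_notX]].
    by apply: eq_bigl => a; rewrite inE.
  by case/andP: (out_full a tl_X hd_notX) => _ /eqP.
Qed.

Lemma Nflow_forward_walk g : is_Nflow g -> 0 < netflow g s ->
  exists st, [/\ swalk s st t, all (fun x => x.2 && (0 < g x.1)) st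
               & uniq (s :: map dst st)].
Proof.
move=> [g_ge0 _ g_cons] pos_g.
pose X := [set v | connect (step_rel (fun x => x.2 && (0 < g x.1))) s v].
suff : t \in X by rewrite inE => /connect_swalk.
have s_X : s \in X by rewrite inE connect0.
apply: contraTT pos_g => t_notX; rewrite -leNgt (netflow_cut g_cons s_X t_notX).
rewrite big1 ?sub0r ?oppr_le0 ?sumr_ge0 // => a /andP[tl_X hd_notX].
apply/eqP; rewrite eq_le g_ge0 andbT leNgt; apply: contraNN hd_notX => pos_a.
by move: tl_X; rewrite !inE => /(connect_step (x := (a, true))); apply; rewrite /= pos_a.
Qed.

Lemma Nflow_decompose k g : s != t -> is_Nflow g -> netflow g s = k%:R ->
  exists F : 'I_k -> {set E},
    (forall i, stpath (F i) /\ {in F i :&: N, forall a, 0 < g a}) /\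
    (forall i j, i != j -> [disjoint F i :&: N & F j]).
Proof.
move=> neq_st; elim: k g => [|k IH] g flow_g value_g.
  by exists (fun _ => set0); split => -[].
have [g_ge0 g_le1 _] := flow_g.
have [|st [walk_st fwd_st uniq_st]] := Nflow_forward_walk flow_g.
  by rewrite value_g ltr0Sn.
pose P := [set a in map fst st].
have on_P a : a \in P -> walk_flow st a = 1 /\ 0 < g a.
  rewrite inE => /mapP[[b []] /[dup] b_st /(allP fwd_st) //= pos_b ->].
  by rewrite (walk_flow_in _ b_st) ?(swalk_uniq_arcs walk_st).
have walk_flow_ge0 a : 0 <= walk_flow st a.
  have [/on_P[-> _] //|a_notP] := boolP (a \in P).
  by rewrite walk_flow_notin //; rewrite inE in a_notP.
pose g' a := g a + -1 * walk_flow st a.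
have [flow_g' value_g'] : is_Nflow g' /\ netflow g' s = netflow g s + -1.
  apply: Nflow_shift => // -[a b] /(allP fwd_st) /= /andP[-> pos_a].
  rewrite /sign /=; split => [|a_N]; [lia | by have := g_le1 _ a_N; lia].
(* Private arcs of the peeled path carried flow 1 and now carry none, so they
   lie outside the support of the paths obtained from g'. *)
have [|F' [F'_path F'_disj]] := IH g' flow_g'; first by rewrite value_g' value_g -natr1 addrK.
have disj_sym (A B : {set E}) : [disjoint A :&: N & B] -> [disjoint B :&: N & A].
  by rewrite -!setI_eq0 setIAC [A :&: B]setIC setIAC.
apply: (family_extend (x := P) (p := fun A => stpath A /\ {in A :&: N, forall a, 0 < g a})
                      disj_sym _ _ _ F'_disj).
- split; last by move=> a /setIP[/on_P[]].
  by apply: forward_stpath => //; apply: sub_all fwd_st => x /andP[].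
- move=> i; have [path_i supp_i] := F'_path i; split => // a /supp_i.
  by rewrite /g'; have := walk_flow_ge0 a; lia.
- move=> i; rewrite -setI_eq0; apply/eqP/setP => a; rewrite !in_setI in_set0.
  apply/negP => /andP[/andP[a_P a_N] a_i].
  have := (F'_path i).2 a; rewrite in_setI a_i a_N /g' => /(_ isT).
  by have [-> pos_a] := on_P a a_P; have := g_le1 a a_N; lia.
Qed.

Lemma Nflow_N_packing k g : s != t -> is_Nflow g -> netflow g s = k%:R ->
  N_packing tl hd s t N k.
Proof.
move=> neq_st flow_g /(Nflow_decompose neq_st flow_g)[F [F_path F_disj]].
by exists F; split => // i; case: (F_path i).
Qed.

Theorem N_menger : is_stcut N ->
  exists C : {set E}, [/\ C \subset N, is_stcut C & #|C| = sigmaN tl hd s t N].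
Proof.
move=> cut_N; have neq_st := stcut_neq cut_N.
have value_le k g : is_Nflow g -> netflow g s = k%:R -> (k <= #|E|)%N.
  move=> flow_g /(Nflow_N_packing neq_st flow_g)/(N_packing_le_cut (subxx N) cut_N).
  by move/leq_trans; apply; apply: max_card.
have flow_or_cut m : (exists g, is_Nflow g /\ netflow g s = m%:R) \/
    exists (C : {set E}) g, [/\ C \subset N, is_stcut C, is_Nflow g & netflow g s = #|C|%:R].
  elim: m => [|m [[g [flow_g value_g]]|]]; last by right.
    have netflow0 v : netflow (fun _ => 0) v = 0 by rewrite /netflow !big1.
    by left; exists (fun _ => 0); split; [split => // v _ _|]; rewrite netflow0.
  have [[g' [flow_g' value_g']]|[C [sub_CN cut_C value_C]]] := Nflow_augment_or_cut flow_g neq_st.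
    by left; exists g'; rewrite value_g' value_g natr1.
  by right; exists C, g.
have [[g [flow_g value_g]]|[C [g [sub_CN cut_C flow_g value_C]]]] := flow_or_cut #|E|.+1.
  by have := value_le _ _ flow_g value_g; rewrite ltnn.
exists C; split => //; apply/eqP; rewrite eqn_leq; apply/andP; split.
  apply: leq_bmax; first exact: Nflow_N_packing value_C.
  by rewrite ltnS ltnW // ltnS max_card.
apply: N_packing_le_cut sub_CN cut_C _; apply: bmax_sat.
by exists (fun _ => set0); split => -[].
Qed.

End Network.

Section Core.
Variables (V E : finType) (tl hd : E -> V) (s t : V) (N : {set E}) (R : realType).
Local Notation stpath := (is_stpath tl hd s t).
Local Open Scope ring_scope.

Lemma gamma_t_path_gt0 P : stpath P -> (0 < gamma_t tl hd s t N (N :&: P))%N.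
Proof.
move=> path_P; rewrite /gamma_t; case: eqP => _; apply: leq_bmax => //.
  by exists (fun _ => P); split => // i j; rewrite !ord1 eqxx.
exists (fun _ => P); split => [i|i j]; last by rewrite !ord1 eqxx.
split => //; apply/subsetP => a a_P; rewrite !inE a_P andbT.
by case: (a \in N).
Qed.

Lemma le_xsum_subset (x : E -> R) (S T : {set E}) :
  (forall a, a \in T -> 0 <= x a) -> S \subset T -> xsum x S <= xsum x T.
Proof.
move=> x_ge0 sub_ST; rewrite /xsum [leRHS](big_setID S) /= (setIidPr sub_ST) lerDl.
by apply: sumr_ge0 => a /setDP[a_T _]; apply: x_ge0.
Qed.

Lemma disj_packing_le_xsum (x : E -> R) (S : {set E}) k :
  (forall a, a \in N -> 0 <= x a) -> S \subset N ->
  (forall P, stpath P -> 1 <= xsum x (N :&: P)) ->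
  disj_packing tl hd s t (S :|: ~: N) k -> k%:R <= xsum x S.
Proof.
move=> x_ge0 sub_SN x_paths [F [F_path F_disj]].
pose G i := N :&: F i.
have G_disj i j : i != j -> [disjoint G i & G j].
  by move/F_disj; apply: disjointW; apply: subsetIr.
have sub_GS : \bigcup_i G i \subset S.
  apply/bigcupsP => i _; apply/subsetP => a /setIP[a_N a_F].
  by move: (subsetP (F_path i).2 a a_F); rewrite !inE a_N orbF.
apply: le_trans (le_xsum_subset _ sub_GS); last by move=> a /(subsetP sub_SN)/x_ge0.
rewrite /xsum partition_disjoint_bigcup //.
have -> : k%:R = \sum_(i < k) 1 :> R by rewrite sumr_const card_ord.
by apply: ler_sum => i _; apply: x_paths; case: (F_path i).
Qed.

Lemma core_iff (x : E -> R) :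
  in_core tl hd s t N x <->
  in_chi tl hd s t N x /\ forall P, stpath P -> 1 <= xsum x (N :&: P).
Proof.
split=> [[chi_x core_x]|[[x_ge0 x_N] x_paths]].
  split => // P path_P; apply: le_trans (core_x _ (subsetIl _ _)).
  by rewrite ler1n gamma_t_path_gt0.
split => // S sub_SN; rewrite /gamma_t; case: eqP => [->|_]; first by rewrite x_N.
apply: disj_packing_le_xsum => //; apply: bmax_sat.
by exists (fun _ => set0); split => -[].
Qed.

Lemma stcut_indicator_core (C : {set E}) :
  C \subset N -> is_stcut tl hd s t C -> #|C| = sigmaN tl hd s t N ->
  in_core tl hd s t N (fun a => if a \in C then 1 else 0 : R).
Proof.
move=> sub_CN cut_C card_C; apply/core_iff; split; first split.
- by move=> a _; case: ifP.
- rewrite /xsum -big_mkcondr -card_C -sumr_const; apply: eq_bigl => a /=.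
  by case a_C: (a \in C); rewrite ?andbT ?andbF ?(subsetP sub_CN).
- move=> P /cut_C /set0Pn[c /setIP[c_P c_C]].
  rewrite /xsum (bigD1 c) /=; last by rewrite inE (subsetP sub_CN) // c_P.
  by rewrite c_C lerDl sumr_ge0 // => a _; case: ifP.
Qed.

End Core.

Unset Implicit Arguments. Set Strict Implicit.

Theorem lemma5 (R : realType) (V E : finType) (tl hd : E -> V) (s t : V)
  (N : {set E})
  (hN : forall P : {set E}, is_stpath tl hd s t P -> P :&: N != set0)
  (hE : forall e : E, exists P : {set E}, is_stpath tl hd s t P /\ e \in P) :
  (forall x : E -> R,
     in_core tl hd s t N x <->
     (in_chi tl hd s t N x /\
      forall P : {set E}, is_stpath tl hd s t P ->
        (1 <= xsum x (N :&: P))%R)) /\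
  (exists x : E -> R, in_core tl hd s t N x).
Proof.
split => [x|]; first exact: core_iff.
have [C [sub_CN cut_C card_C]] := N_menger hN.
by eexists; apply: stcut_indicator_core cut_C card_C.
Qed.
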